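(* Let $P>0$, let $\omega:[0,\infty)\to(0,\infty)$ be continuous, and let $\hat{x}:[0,\infty)\times\mathbb{R}\to\mathbb{R}^n$ satisfy $\hat{x}(\tau,t)=\hat{x}(\tau,t+P)$ for all $\tau,t$. For $\theta\in\mathbb{R}$ define $\Omega_\theta(t)=\theta+\int_0^t\omega(s)\,ds$ and $x_\theta(t)=\hat{x}\big(t,\Omega_\theta(t)\big)$. Let $L>0$ satisfy $L>\frac{P}{\omega(\tau)}$ for every $\tau>0$, and let $\varepsilon>0$. Suppose that $$\big\|\hat{x}(\tau+\delta,t)-\hat{x}(\tau,t)\big\|\le\varepsilon$$ for all $\tau>0$, all $t\in\mathbb{R}$ and all $\delta\in(0,L]$. Then for every $\theta\in\mathbb{R}$ and every $\tau>0$, $$\big\|x_\theta\big(\tau+T(\tau)\big)-x_\theta(\tau)\big\|\le\varepsilon,$$ where $T(\tau)>0$ is the unique solution of $P=\int_\tau^{\tau+T(\tau)}\omega(s)\,ds$.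
   Context: This arises from the multi-rate reformulation of circuit equations: $\hat{x}(\tau,t)$ is a multi-rate solution that is $P$-periodic in the fast variable $t$, $\omega$ is a positive frequency parameter, and $x_\theta$ is the single-rate signal recovered along the characteristic $t\mapsto(t,\Omega_\theta(t))$. *)

From Stdlib Require Import Reals.
From Coquelicot Require Import Coquelicot.
Open Scope R_scope.

(* Vectors of R^n are represented as functions nat -> R, of which only the
   coordinates 0..n-1 matter; ||.|| is the Euclidean norm on R^n. *)
Definition vec := nat -> R.

Definition vsub (u v : vec) : vec := fun i => u i - v i.

Fixpoint sumsq (n : nat) (v : vec) : R :=
  match n with
  | O => 0
  | S k => sumsq k v + (v k) ^ 2
  end.

Definition vnorm (n : nat) (v : vec) : R := sqrt (sumsq n v).

Definition Omega (omega : R -> R) (theta t : R) : R := theta + RInt omega 0 t.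

Definition xtheta (xhat : R -> R -> vec) (omega : R -> R) (theta t : R) : vec :=
  xhat t (Omega omega theta t).

(* Since ω > P/L on (0,∞), the phase Ω_θ grows faster than P/L, so it gains exactly one period P
   at a unique time T(τ) ≤ L.  By P-periodicity of x̂ in its fast variable,
   x_θ(τ + T) = x̂(τ + T, Ω_θ(τ) + P) = x̂(τ + T, Ω_θ(τ)), and the slow-variation bound with δ = T
   compares this with x_θ(τ) = x̂(τ, Ω_θ(τ)). *)

From Stdlib Require Import Reals Lra.
From Coquelicot Require Import Coquelicot.
From Stdlib Require Import ssreflect.
Open Scope R_scope.

Lemma continuous_Rmax0 (y : R) : continuous (Rmax 0) y.
Proof.
  apply filterlim_locally => eps; exists eps => z Hz.
  apply: Rle_lt_trans Hz.
  rewrite /ball /= /AbsRing_ball /abs /minus /plus /opp /=.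
  unfold Rmax; destruct (Rle_dec 0 z), (Rle_dec 0 y); split_Rabs; lra.
Qed.

Section IntegralOfContinuousOnHalfLine.

Variable f : R -> R.
Hypothesis f_cont : forall s, 0 <= s ->
  filterlim f (within (fun y => 0 <= y) (locally s)) (locally (f s)).

(* Continuity is only assumed within [0, ∞); composing with [Rmax 0] gives a globally
   continuous function that agrees with [f] there. *)
Lemma continuous_comp_Rmax0 (y : R) : continuous (fun z => f (Rmax 0 z)) y.
Proof.
  apply: filterlim_comp (f_cont _ (Rmax_l 0 y)) => Q HQ.
  apply: (filter_imp (fun z => 0 <= Rmax 0 z -> Q (Rmax 0 z)))
    (continuous_Rmax0 y _ HQ) => z Hz.
  exact: Hz (Rmax_l 0 z).
Qed.

Lemma ex_RInt_nonneg (a b : R) : 0 <= a -> 0 <= b -> ex_RInt f a b.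
Proof.
  move=> Ha Hb.
  apply: (ex_RInt_ext (fun z => f (Rmax 0 z))).
  - move=> x Hx; rewrite Rmax_right //.
    have : 0 <= Rmin a b by apply: Rmin_glb.
    lra.
  - apply: (ex_RInt_continuous (V := R_CompleteNormedModule)) => z _.
    exact: continuous_comp_Rmax0.
Qed.

Lemma continuous_RInt_nonneg (a u : R) : 0 <= a -> 0 < u ->
  continuous (fun v => RInt f a v) u.
Proof.
  move=> Ha Hu.
  apply: (continuous_RInt_1 f a u).
  apply: (locally_interval _ u 0 p_infty) => //= y Hy _.
  apply: (RInt_correct (V := R_CompleteNormedModule)).
  apply: ex_RInt_nonneg; lra.
Qed.

Variable m : R.
Hypothesis f_ge : forall s, 0 < s -> m <= f s.

Lemma RInt_ge_length_mul (a b : R) : 0 < a -> a <= b -> (b - a) * m <= RInt f a b.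
Proof.
  move=> Ha Hab.
  have -> : (b - a) * m = RInt (fun _ => m) a b by rewrite RInt_const.
  apply: RInt_le => //.
  - exact: ex_RInt_const.
  - apply: ex_RInt_nonneg; lra.
  - move=> x Hx; apply: f_ge; lra.
Qed.

Hypothesis m_pos : 0 < m.

Lemma RInt_from_strict_increasing (a u v : R) : 0 < a -> a <= u < v ->
  RInt f a u < RInt f a v.
Proof.
  move=> Ha Huv.
  rewrite -(RInt_Chasles f a u v); try (apply: ex_RInt_nonneg; lra).
  have := RInt_ge_length_mul u v ltac:(lra) ltac:(lra).
  have : 0 < (v - u) * m by apply: Rmult_lt_0_compat; lra.
  change plus with Rplus; lra.
Qed.

Lemma RInt_from_reaches_unique (a c : R) : 0 < a -> 0 < c ->
  exists! T, 0 < T /\ RInt f a (a + T) = c.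
Proof.
  move=> Ha Hc.
  pose G v := RInt f a v - c.
  have HG : forall v, a <= v <= a + 2 * c / m -> continuity_pt G v.
  { move=> v Hv; apply: continuity_pt_minus; last exact: continuity_pt_const.
    apply/continuity_pt_filterlim/continuous_RInt_nonneg; lra. }
  have HGa : G a < 0 by rewrite /G RInt_point /zero /=; lra.
  have Hwidth : 0 < 2 * c / m by apply: Rdiv_lt_0_compat; lra.
  have Hab : a < a + 2 * c / m by lra.
  have HGb : 0 < G (a + 2 * c / m).
  { have := RInt_ge_length_mul a (a + 2 * c / m) Ha (Rlt_le _ _ Hab).
    rewrite /G; replace ((a + 2 * c / m - a) * m) with (2 * c) by (field; lra).
    lra. }
  have [z [Hz HGz]] := Ranalysis5.IVT_interv G a (a + 2 * c / m) HG Hab HGa HGb.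
  have Hza : a < z.
  { case: (Rle_lt_or_eq_dec a z ltac:(lra)) => // Haz.
    rewrite -Haz in HGz; lra. }
  have Hz_c : RInt f a z = c by rewrite /G in HGz; lra.
  exists (z - a); split.
  { replace (a + (z - a)) with z by ring; split; lra. }
  move=> T [HT HTc].
  case: (Rtotal_order (z - a) T) => [Hlt | [// | Hgt]].
  - have := RInt_from_strict_increasing a z (a + T) Ha ltac:(lra); lra.
  - have := RInt_from_strict_increasing a (a + T) z Ha ltac:(lra); lra.
Qed.

End IntegralOfContinuousOnHalfLine.

Theorem lemma1 (n : nat) (P : R) (omega : R -> R) (xhat : R -> R -> vec)
  (L eps : R)
  (HP : 0 < P)
  (Hom_pos : forall s, 0 <= s -> 0 < omega s)
  (Hom_cont : forall s, 0 <= s ->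
     filterlim omega (within (fun y => 0 <= y) (locally s)) (locally (omega s)))
  (Hper : forall tau t, 0 <= tau -> xhat tau t = xhat tau (t + P))
  (HL : 0 < L)
  (HLom : forall tau, 0 < tau -> L > P / omega tau)
  (Heps : 0 < eps)
  (Hslow : forall tau t delta, 0 < tau -> 0 < delta <= L ->
     vnorm n (vsub (xhat (tau + delta) t) (xhat tau t)) <= eps) :
  forall theta tau, 0 < tau ->
    (exists! T, 0 < T /\ RInt omega tau (tau + T) = P) /\
    (forall T, 0 < T -> RInt omega tau (tau + T) = P ->
       vnorm n (vsub (xtheta xhat omega theta (tau + T))
                     (xtheta xhat omega theta tau)) <= eps).
Proof.
  have HPL : 0 < P / L by apply: Rdiv_lt_0_compat.
  have Hom_ge : forall s, 0 < s -> P / L <= omega s.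
  { move=> s Hs; have Hom := Hom_pos s (Rlt_le _ _ Hs).
    apply/Rlt_le/Rlt_div_l => //; rewrite Rmult_comm.
    apply/Rlt_div_l => //; exact: HLom. }
  move=> theta tau Htau; split.
  { exact: RInt_from_reaches_unique Hom_cont _ Hom_ge HPL _ _ Htau HP. }
  move=> T HT HTP.
  have HTL : T <= L.
  { have := RInt_ge_length_mul _ Hom_cont _ Hom_ge tau (tau + T) Htau ltac:(lra).
    rewrite HTP; replace (tau + T - tau) with T by ring.
    move/(Rmult_le_compat_r (L / P)).
    replace (T * (P / L) * (L / P)) with T by (field; lra).
    replace (P * (L / P)) with L by (field; lra).
    apply; apply: Rlt_le; apply: Rdiv_lt_0_compat; lra. }
  have Hphase : Omega omega theta (tau + T) = Omega omega theta tau + P.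
  { rewrite /Omega -(RInt_Chasles omega 0 tau (tau + T));
      try (apply: (ex_RInt_nonneg _ Hom_cont); lra).
    change plus with Rplus; rewrite HTP; ring. }
  rewrite /xtheta Hphase -Hper; last lra.
  apply: Hslow; lra.
Qed.
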